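(* For every $k\ge2$ and every density operator $\rho$ (on a finite-dimensional multipartite system for the first identity, on $\mathbb{C}^d$ with a fixed orthonormal basis for the second), $$E_G^{(k)}(\rho)=\inf_{\varsigma\in\mathcal{P}^{(k-1)}}\big(1-F(\rho,\varsigma)\big),\qquad C_G^{(k)}(\rho)=\inf_{\sigma\in\mathcal{I}^{(k-1)}}\big(1-F(\rho,\sigma)\big),$$ where $F(\rho,\sigma)=\big(\mathrm{Tr}\sqrt{\sqrt\rho\,\sigma\sqrt\rho}\big)^2$.
   Context: A multipartite pure state is $k$-producible if it is a tensor product of factors each pertaining to at most $k$ parties; a mixed state is $k$-producible if it is a convex combination of $k$-producible pure states; $\mathcal{P}^{(k)}$ is the set of $k$-producible states. For a fixed orthonormal basis $\{|i\rangle\}$ of $\mathbb{C}^d$, the coherence rank of a pure state is its number of nonzero coefficients in this basis, the coherence number $\mathrm{CN}(\rho)$ is the minimum over pure-state decompositions $\rho=\sum_ip_i|\psi_i\rangle\langle\psi_i|$ of $\max_i$ of the coherence ranks, and $\mathcal{I}^{(k)}$ is the set of states with $\mathrm{CN}\le k$ (its pure states are those with coherence rank $\le k$). The geometric measures are defined for pure states by $E_G^{(k)}(|\psi\rangle)=\inf_{|\varsigma\rangle\in\mathcal{P}^{(k-1)}\text{ pure}}(1-|\langle\varsigma|\psi\rangle|^2)$, $C_G^{(k)}(|\psi\rangle)=\inf_{|\sigma\rangle\in\mathcal{I}^{(k-1)}\text{ pure}}(1-|\langle\sigma|\psi\rangle|^2)$, and for mixed states by the convex roof: $E_G^{(k)}(\rho)=\inf\sum_ip_iE_G^{(k)}(|\psi_i\rangle)$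 and $C_G^{(k)}(\rho)=\inf\sum_ip_iC_G^{(k)}(|\psi_i\rangle)$, infima over all pure-state decompositions $\rho=\sum_ip_i|\psi_i\rangle\langle\psi_i|$, $p_i\ge0$. *)

(* Complex numbers are modelled by an arbitrary
   numClosedFieldType C whose real part is Dedekind complete (hypothesis
   stated in the theorem); such C is (isomorphic to) the complex numbers. *)
From HB Require Import structures.
From mathcomp Require Import all_boot all_order all_algebra.
From Stdlib Require Import Classical ClassicalEpsilon.
Set Implicit Arguments. Unset Strict Implicit. Unset Printing Implicit Defensive.
Import Order.TTheory GRing.Theory Num.Theory.
Local Open Scope ring_scope.

Section QDefs.
Variable C : numClosedFieldType.

Definition is_glb (A : C -> Prop) (g : C) : Prop :=
  (forall x, A x -> g <= x) /\ (forall l, (forall x, A x -> l <= x) -> l <= g).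

Definition real_complete : Prop :=
  forall A : C -> Prop, (exists x, A x) -> (forall x, A x -> x \is Num.real) ->
    (exists l, forall x, A x -> l <= x) -> exists g, is_glb A g.

(* the infimum (chosen glb; 0 if none exists) *)
Definition infC (A : C -> Prop) : C :=
  match excluded_middle_informative (exists g, is_glb A g) with
  | left H => proj1_sig (constructive_indefinite_description _ H)
  | right _ => 0
  end.

Variable N : nat.

Definition adjmx (m p : nat) (M : 'M[C]_(m, p)) : 'M[C]_(p, m) :=
  (map_mx Num.conj M)^T.

Definition psd (M : 'M[C]_N) : Prop :=
  forall v : 'cV[C]_N, 0 <= (adjmx v *m M *m v) 0 0.

Definition density (rho : 'M[C]_N) : Prop := psd rho /\ \tr rho = 1.

Definition sqrtm (M : 'M[C]_N) : 'M[C]_N :=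
  match excluded_middle_informative (exists S, psd S /\ S *m S = M) with
  | left H => proj1_sig (constructive_indefinite_description _ H)
  | right _ => 0
  end.

Definition fidelity (rho sigma : 'M[C]_N) : C :=
  (\tr (sqrtm (sqrtm rho *m sigma *m sqrtm rho))) ^+ 2.

Definition inner (phi psi : 'cV[C]_N) : C := (adjmx phi *m psi) 0 0.

Definition normalized (psi : 'cV[C]_N) : Prop := inner psi psi = 1.

Definition proj (psi : 'cV[C]_N) : 'M[C]_N := psi *m adjmx psi.

Definition pure_decomp (rho : 'M[C]_N) (s : seq (C * 'cV[C]_N)) : Prop :=
  (forall pv, pv \in s -> 0 <= pv.1 /\ normalized pv.2) /\
  rho = \sum_(pv <- s) pv.1 *: proj pv.2.

Definition mixed_hull (S : 'cV[C]_N -> Prop) (sigma : 'M[C]_N) : Prop :=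
  exists s : seq (C * 'cV[C]_N),
    (forall pv, pv \in s -> 0 <= pv.1 /\ normalized pv.2 /\ S pv.2) /\
    \sum_(pv <- s) pv.1 = 1 /\
    sigma = \sum_(pv <- s) pv.1 *: proj pv.2.

Definition geo_pure (S : 'cV[C]_N -> Prop) (psi : 'cV[C]_N) : C :=
  infC (fun x => exists phi, S phi /\ normalized phi /\
                   x = 1 - `|inner phi psi| ^+ 2).

Definition geo_roof (S : 'cV[C]_N -> Prop) (rho : 'M[C]_N) : C :=
  infC (fun x => exists s, pure_decomp rho s /\
                   x = \sum_(pv <- s) pv.1 * geo_pure S pv.2).

Definition geo_fid (S : 'cV[C]_N -> Prop) (rho : 'M[C]_N) : C :=
  infC (fun x => exists sigma, mixed_hull S sigma /\ x = 1 - fidelity rho sigma).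

End QDefs.

Arguments is_glb {C}. Arguments infC {C}. Arguments adjmx {C m p}.
Arguments psd {C N}. Arguments density {C N}. Arguments sqrtm {C N}.
Arguments fidelity {C N}. Arguments inner {C N}. Arguments normalized {C N}.
Arguments proj {C N}. Arguments pure_decomp {C N}. Arguments mixed_hull {C N}.
Arguments geo_pure {C N}. Arguments geo_roof {C N}. Arguments geo_fid {C N}.

Unset Implicit Arguments.

(* n parties, party i has local dimension d i; computational basis of the
   total space is indexed by the finType prodT d, and the total space is
   C^#|prodT d| via enum_rank. *)
Definition prodT {n : nat} (d : 'I_n -> nat) : finType :=
  {dffun forall i : 'I_n, 'I_(d i)}.

(* psi is a tensor product of factors, each on a block of at most k parties:
   there is a partition P of the parties into blocks of size <= k and, for
   each block B, a vector phi B on the parties of B (a function of the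
   coordinates in B only) such that psi(x) = prod_B phi_B(x|_B). *)
Definition k_producible_pure {C : numClosedFieldType} {n : nat} (d : 'I_n -> nat)
    (k : nat) (psi : 'cV[C]_#|prodT d|) : Prop :=
  exists (P : {set {set 'I_n}}) (phi : {set 'I_n} -> prodT d -> C),
    partition P [set: 'I_n] /\
    (forall B, B \in P -> #|B| <= k)%N /\
    (forall B, B \in P -> forall x y : prodT d,
        (forall i, i \in B -> x i = y i) -> phi B x = phi B y) /\
    (forall x : prodT d, psi (enum_rank x) 0 = \prod_(B in P) phi B x).

(* pure states of k-producible form (normalization is imposed where used) *)
Definition E_G {C : numClosedFieldType} {n} (d : 'I_n -> nat) (k : nat)
    (rho : 'M[C]_#|prodT d|) : C :=
  geo_roof (k_producible_pure d k.-1) rho.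

Definition coh_rank {C : numClosedFieldType} {D : nat} (psi : 'cV[C]_D) : nat :=
  #|[set i : 'I_D | psi i 0 != 0]|.

Definition C_G {C : numClosedFieldType} {D : nat} (k : nat) (rho : 'M[C]_D) : C :=
  geo_roof (fun psi : 'cV[C]_D => (coh_rank psi <= k.-1)%N) rho.

(* Uhlmann's theorem in the form |Tr(A^* B)| <= Tr sqrt(sqrt rho B B^* sqrt rho)
   for every factorization rho = A A^*, with equality for a suitable A as soon as
   B has N zero columns, links the two infima.  If sigma = B B^* with columns
   sqrt(q_j) phi_j, the optimal A has columns sqrt(p_j) psi_j: this is a pure-state
   decomposition of rho, and Cauchy-Schwarz gives
   F(rho, sigma) <= sum_j p_j |<phi_j|psi_j>|^2, so that
   sum_j p_j E(psi_j) <= 1 - F(rho, sigma).  Conversely, for a decomposition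
   rho = sum_j p_j |psi_j><psi_j| and nearly optimal phi_j, weighting the phi_j
   by their overlaps with the psi_j gives a sigma in the hull with
   F(rho, sigma) >= sum_j p_j |<phi_j|psi_j>|^2. *)

From HB Require Import structures.
From mathcomp Require Import all_boot all_order all_algebra.
From mathcomp Require Import ring spectral.
From Stdlib Require Import Classical ClassicalEpsilon.
Set Implicit Arguments. Unset Strict Implicit. Unset Printing Implicit Defensive.
Import Order.TTheory GRing.Theory Num.Theory.
Local Open Scope ring_scope.

Section Adjoint.
Variable C : numClosedFieldType.

Lemma adjmxE m p (A : 'M[C]_(m, p)) i j : adjmx A i j = (A j i)^*.
Proof. by rewrite /adjmx !mxE. Qed.

Lemma adjmxK m p (A : 'M[C]_(m, p)) : adjmx (adjmx A) = A.
Proof. by apply/matrixP=> i j; rewrite !adjmxE conjCK. Qed.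

Lemma adjmx_trmxC m p (A : 'M[C]_(m, p)) : adjmx A = map_mx Num.conj A^T.
Proof. by rewrite /adjmx map_trmx. Qed.

Lemma adjmx_mul m p q (A : 'M[C]_(m, p)) (B : 'M[C]_(p, q)) :
  adjmx (A *m B) = adjmx B *m adjmx A.
Proof. by rewrite !adjmx_trmxC trmx_mul map_mxM. Qed.

Lemma adjmxD m p (A B : 'M[C]_(m, p)) : adjmx (A + B) = adjmx A + adjmx B.
Proof. by rewrite /adjmx map_mxD linearD. Qed.

Lemma adjmxB m p (A B : 'M[C]_(m, p)) : adjmx (A - B) = adjmx A - adjmx B.
Proof. by rewrite /adjmx map_mxB linearB. Qed.

Lemma adjmxZ m p a (A : 'M[C]_(m, p)) : adjmx (a *: A) = a^* *: adjmx A.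
Proof. by apply/matrixP=> i j; rewrite /adjmx !mxE rmorphM. Qed.

Lemma adjmx0 m p : adjmx (0 : 'M[C]_(m, p)) = 0.
Proof. by apply/matrixP=> i j; rewrite /adjmx !mxE rmorph0. Qed.

Lemma adjmx1 n : adjmx (1%:M : 'M[C]_n) = 1%:M.
Proof. by apply/matrixP=> i j; rewrite /adjmx !mxE eq_sym rmorph_nat. Qed.

Lemma adjmx_diag n (d : 'rV[C]_n) : adjmx (diag_mx d) = diag_mx (map_mx Num.conj d).
Proof.
apply/matrixP=> i j; rewrite /adjmx !mxE eq_sym.
by case: eqP => [->|_]; rewrite ?mulr1n ?mulr0n ?rmorph0.
Qed.

Lemma mul_adjmx_diag m p (A : 'M[C]_(m, p)) i :
  (A *m adjmx A) i i = \sum_j `|A i j| ^+ 2.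
Proof. by rewrite mxE; apply: eq_bigr => j _; rewrite adjmxE normCK. Qed.

Lemma mul_adjmx_diag_ge0 m p (A : 'M[C]_(m, p)) i : 0 <= (A *m adjmx A) i i.
Proof. by rewrite mul_adjmx_diag sumr_ge0 // => j _; rewrite exprn_ge0. Qed.

Lemma mul_adjmx_eq0 m p (A : 'M[C]_(m, p)) : A *m adjmx A = 0 -> A = 0.
Proof.
move=> AA0; apply/matrixP=> i j; rewrite mxE.
have /esym/eqP := mul_adjmx_diag A i; rewrite AA0 mxE psumr_eq0 => [|k _]; last first.
  exact: exprn_ge0.
by move=> /allP/(_ j (mem_index_enum _)); rewrite expf_eq0 /= normr_eq0 => /eqP.
Qed.

End Adjoint.

Section PositiveSemidefinite.
Variables (C : numClosedFieldType) (N : nat).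

Definition qform (M : 'M[C]_N) (u v : 'cV[C]_N) : C := (adjmx u *m M *m v) 0 0.

Lemma qform_delta (M : 'M[C]_N) i j : qform M (delta_mx i 0) (delta_mx j 0) = M i j.
Proof.
rewrite /qform -colE.
have -> : adjmx (delta_mx i 0 : 'cV[C]_N) = delta_mx 0 i.
  by apply/matrixP=> a b; rewrite /adjmx !mxE rmorph_nat andbC.
rewrite !mxE (bigD1 i) //= big1 => [|k /negbTE nki]; last by rewrite !mxE nki mul0r.
by rewrite !mxE !eqxx mul1r addr0.
Qed.

Lemma qform_expand (M : 'M[C]_N) u w c :
  qform M (u + c *: w) (u + c *: w) =
  qform M u u + c * qform M u w + c^* * qform M w u + c^* * c * qform M w w.
Proof.
rewrite /qform adjmxD adjmxZ !mulmxDl !mulmxDr -!scalemxAl -!scalemxAr !mxE.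
by rewrite mulrA; ring.
Qed.

Lemma conjC_eq_of_polar (a b : C) :
  (a + b)^* = a + b -> ('i * (a - b))^* = 'i * (a - b) -> a^* = b.
Proof.
rewrite rmorphD rmorphM rmorphB /= => sum_real.
rewrite [X in X * _ = _]conjCi => diff_real.
have diff_conj : a^* - b^* = b - a.
  have := congr1 (GRing.mul 'i) diff_real.
  by rewrite !mulrA mulrN -expr2 sqrCi opprK mul1r mulN1r opprB.
have : a^* * 2 = b * 2.
  have -> : a^* * 2 = (a^* + b^*) + (a^* - b^*) by ring.
  by rewrite sum_real diff_conj; ring.
by apply: mulIf; rewrite pnatr_eq0.
Qed.

(* polarization: the form of [M] is real on [e_j + e_i] and on [e_j + 'i e_i] *)
Lemma psd_adjmx (M : 'M[C]_N) : psd M -> adjmx M = M.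
Proof.
move=> psdM; apply/matrixP=> i j; rewrite adjmxE.
have qreal v : (qform M v v)^* = qform M v v by rewrite geC0_conj //; apply: psdM.
have real_mid (x y z : C) : x^* = x -> y^* = y -> (x + z + y)^* = x + z + y -> z^* = z.
  by move=> xr yr; rewrite !rmorphD /= xr yr => /addIr/addrI.
have := qreal (delta_mx j 0 + 'i *: delta_mx i 0).
have := qreal (delta_mx j 0 + 1 *: delta_mx i 0).
have := qreal (delta_mx i 0); have := qreal (delta_mx j 0).
rewrite !qform_expand !qform_delta conjCi rmorph1 !mul1r [- 'i * 'i]mulNr -expr2 sqrCi.
rewrite opprK mul1r mulNr -(addrA _ ('i * _) (- _)) -mulrBr -(addrA _ (M j i)) => Mjj Mii.
move=> /(real_mid _ _ _ Mjj Mii) sum_real /(real_mid _ _ _ Mjj Mii).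
exact: conjC_eq_of_polar.
Qed.

End PositiveSemidefinite.

Section Spectral.
Variables (C : numClosedFieldType) (N : nat).

Definition spectral_decomp (M U : 'M[C]_N) (d : 'rV[C]_N) :=
  [/\ U *m adjmx U = 1%:M, forall k, 0 <= d 0 k & M = adjmx U *m diag_mx d *m U].

Lemma psd_spectral_decomp (M : 'M[C]_N) : psd M -> exists U d, spectral_decomp M U d.
Proof.
move=> psdM; have Mh := psd_adjmx psdM.
have /orthomx_spectralP : M \is normalmx by apply/normalmxP; rewrite -adjmx_trmxC Mh.
set U := spectralmx M; set d := spectral_diag M => M_spec.
have /unitarymxP U_unitary : U \is unitarymx by apply: spectral_unitarymx.
rewrite -adjmx_trmxC in U_unitary.
have {}M_spec : M = adjmx U *m diag_mx d *m U.
  by rewrite M_spec invmx_unitary ?spectral_unitarymx // adjmx_trmxC.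
exists U, d; split => // k.
have := psdM (adjmx U *m delta_mx k 0); rewrite -/(qform M _ _).
have -> : qform M (adjmx U *m delta_mx k 0) (adjmx U *m delta_mx k 0) =
          qform (U *m M *m adjmx U) (delta_mx k 0) (delta_mx k 0).
  by rewrite /qform adjmx_mul adjmxK !mulmxA.
rewrite qform_delta M_spec !mulmxA U_unitary mul1mx -mulmxA U_unitary mulmx1.
by rewrite mxE eqxx mulr1n.
Qed.

Lemma spectral_decomp_tr (M U : 'M[C]_N) d :
  spectral_decomp M U d -> \tr M = \sum_k d 0 k.
Proof. by case=> UU _ ->; rewrite mxtrace_mulC mulmxA UU mul1mx mxtrace_diag. Qed.

Lemma psd_conj_diag (U : 'M[C]_N) (d : 'rV[C]_N) :
  (forall k, 0 <= d 0 k) -> psd (adjmx U *m diag_mx d *m U).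
Proof.
move=> d_ge0 v.
have -> : adjmx v *m (adjmx U *m diag_mx d *m U) *m v =
          adjmx (U *m v) *m diag_mx d *m (U *m v) by rewrite adjmx_mul !mulmxA.
rewrite mxE sumr_ge0 // => a _; rewrite mxE (bigD1 a) //= big1 => [|b /negbTE ba].
  by rewrite addr0 !mxE eqxx mulr1n mulrC mulrA -normCK mulr_ge0 ?exprn_ge0.
by rewrite [diag_mx _ _ _]mxE ba mulr0n mulr0.
Qed.

End Spectral.

Section FunctionalCalculus.
Variables (C : numClosedFieldType) (N : nat) (U : 'M[C]_N) (d : 'rV[C]_N).
Hypothesis U_unitary : U *m adjmx U = 1%:M.

Definition fmx (f : C -> C) := adjmx U *m diag_mx (map_mx f d) *m U.

Lemma fmx_mul f g : fmx f *m fmx g = fmx (fun x => f x * g x).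
Proof.
rewrite /fmx !mulmxA -(mulmxA _ U) U_unitary mulmx1 -(mulmxA (adjmx U)).
congr (_ *m _ *m _); apply/matrixP=> i j; rewrite mul_diag_mx !mxE.
by case: eqP => [->|_]; rewrite ?mulr1n ?mulr0n ?mulr0.
Qed.

Lemma eq_fmx f g : (forall k, f (d 0 k) = g (d 0 k)) -> fmx f = fmx g.
Proof.
move=> fg; congr (_ *m _ *m _); congr diag_mx.
by apply/matrixP=> i j; rewrite !mxE ord1 fg.
Qed.

Lemma fmx_id : fmx id = adjmx U *m diag_mx d *m U.
Proof. by congr (_ *m _ *m _); congr diag_mx; apply/matrixP=> i j; rewrite !mxE. Qed.

Lemma fmx_adj f : adjmx (fmx f) = fmx (fun x => (f x)^*).
Proof.
rewrite /fmx !adjmx_mul adjmxK adjmx_diag mulmxA.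
by congr (_ *m _ *m _); congr diag_mx; apply/matrixP=> i j; rewrite !mxE.
Qed.

End FunctionalCalculus.

Section SquareRoot.
Variables (C : numClosedFieldType) (N : nat).

Lemma sqrtmP (M : 'M[C]_N) : psd M -> psd (sqrtm M) /\ sqrtm M *m sqrtm M = M.
Proof.
move=> psdM; suff : exists S, psd S /\ S *m S = M.
  by rewrite /sqrtm; case: excluded_middle_informative => // H _;
     case: constructive_indefinite_description.
have [U [d [UU d_ge0 ->]]] := psd_spectral_decomp psdM.
exists (fmx U d sqrtC); split.
  by apply: psd_conj_diag => k; rewrite mxE sqrtC_ge0.
by rewrite fmx_mul // -fmx_id; apply: eq_fmx => k; rewrite -expr2 sqrtCK.
Qed.

Lemma tr_sqrtm_ge0 (M : 'M[C]_N) : 0 <= \tr (sqrtm M).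
Proof.
rewrite /sqrtm; case: excluded_middle_informative => [H|_]; last by rewrite mxtrace0.
case: constructive_indefinite_description => S [psdS _] /=.
have [U [d decS]] := psd_spectral_decomp psdS.
by rewrite (spectral_decomp_tr decS) sumr_ge0 // => k _; case: decS.
Qed.

Lemma psd_mul_adjmx m (B : 'M[C]_(N, m)) : psd (B *m adjmx B).
Proof.
move=> v; have -> : adjmx v *m (B *m adjmx B) *m v =
                    (adjmx v *m B) *m adjmx (adjmx v *m B).
  by rewrite adjmx_mul adjmxK !mulmxA.
exact: mul_adjmx_diag_ge0.
Qed.

Lemma psd_adjmx_mul (S M : 'M[C]_N) : psd M -> psd (adjmx S *m M *m S).
Proof. by move=> psdM v; have := psdM (S *m v); rewrite adjmx_mul !mulmxA. Qed.

End SquareRoot.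

Section OrthoProjection.
Variables (C : numClosedFieldType) (N : nat).

Definition orthoproj (P : 'M[C]_N) := adjmx P = P /\ P *m P = P.

Lemma orthoproj_compl (P : 'M[C]_N) : orthoproj P -> orthoproj (1%:M - P).
Proof.
case=> Ph Pi; split; first by rewrite adjmxB adjmx1 Ph.
by rewrite mulmxBl mul1mx mulmxBr mulmx1 Pi subrr subr0.
Qed.

Lemma orthoproj_conj_diag_le1 m (P : 'M[C]_N) (W : 'M[C]_(m, N)) k :
  orthoproj P -> W *m adjmx W = 1%:M -> (W *m P *m adjmx W) k k <= 1.
Proof.
move=> /orthoproj_compl[Ih Ii] WW.
have := mul_adjmx_diag_ge0 (W *m (1%:M - P)) k.
rewrite adjmx_mul Ih -mulmxA (mulmxA (1%:M - P)) Ii mulmxBl mul1mx mulmxBr WW.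
by rewrite mulmxA !mxE eqxx mulr1n subr_ge0.
Qed.

End OrthoProjection.

Section PolarFactor.
Variables (C : numClosedFieldType) (N : nat) (Q U : 'M[C]_N) (q : 'rV[C]_N).
Hypothesis decQ : spectral_decomp Q U q.

Let U_unitary : U *m adjmx U = 1%:M. Proof. by case: decQ. Qed.
Let Q_fmx : Q = fmx U q id. Proof. by case: decQ => _ _ ->; rewrite fmx_id. Qed.
Let q_real k : (q 0 k)^* = q 0 k. Proof. by case: decQ => _ q_ge0 _; rewrite geC0_conj. Qed.

(* the projection onto the range of [Q] and the Moore-Penrose inverse of [Q] *)
Let supp := fmx U q (fun x => x * x^-1).
Let ginv := fmx U q GRing.inv.

Let ginv_adj : adjmx ginv = ginv.
Proof. by rewrite fmx_adj; apply: eq_fmx => k; rewrite fmorphV /= q_real. Qed.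

Let supp_orthoproj : orthoproj supp.
Proof.
split; first by rewrite fmx_adj; apply: eq_fmx => k; rewrite rmorphM fmorphV /= q_real.
rewrite fmx_mul //; apply: eq_fmx => k /=.
by have [->|q0] := eqVneq (q 0 k) 0; rewrite ?mul0r // divff // mulr1.
Qed.

Let supp_Q : supp *m Q = Q.
Proof.
rewrite Q_fmx fmx_mul //; apply: eq_fmx => k /=.
by have [->|q0] := eqVneq (q 0 k) 0; rewrite ?mulr0 // divff // mul1r.
Qed.

Let ginv_QQ_ginv : ginv *m (Q *m Q) *m ginv = supp.
Proof.
rewrite Q_fmx !fmx_mul //; apply: eq_fmx => k /=.
by have [->|q0] := eqVneq (q 0 k) 0; [rewrite invr0 !mulr0 | field].
Qed.

Lemma polar_factor_spec m (Y : 'M[C]_(N, m)) : Y *m adjmx Y = Q *m Q ->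
  exists P G, [/\ orthoproj P, P *m Q = Q, Y = Q *m (G *m Y)
                & (G *m Y) *m adjmx (G *m Y) = P].
Proof.
move=> YY; exists supp, ginv; split => //; last first.
  by rewrite adjmx_mul ginv_adj mulmxA -(mulmxA _ Y) YY ginv_QQ_ginv.
have [Ih _] := orthoproj_compl supp_orthoproj.
have /mul_adjmx_eq0 : (1%:M - supp) *m Y *m adjmx ((1%:M - supp) *m Y) = 0.
  rewrite adjmx_mul Ih mulmxA -(mulmxA _ Y) YY mulmxA mulmxBl mul1mx supp_Q.
  by rewrite subrr !mul0mx.
rewrite mulmxBl mul1mx => /eqP; rewrite subr_eq0 => /eqP {1}->.
rewrite mulmxA; congr (_ *m _).
by rewrite Q_fmx fmx_mul //; apply: eq_fmx => k; rewrite mulrC.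
Qed.

End PolarFactor.

Lemma polar_factor (C : numClosedFieldType) N m (Q : 'M[C]_N) (Y : 'M[C]_(N, m)) :
  psd Q -> Y *m adjmx Y = Q *m Q ->
  exists P G, [/\ orthoproj P, P *m Q = Q, Y = Q *m (G *m Y)
                & (G *m Y) *m adjmx (G *m Y) = P].
Proof. by move=> /psd_spectral_decomp[U [q decQ]]; exact: (polar_factor_spec decQ). Qed.

Section Uhlmann.
Variables (C : numClosedFieldType) (N : nat).

Lemma normr_mul_conj_le (a b : C) : `|a * b^*| * 2 <= `|a| ^+ 2 + `|b| ^+ 2.
Proof.
rewrite normrM norm_conjC -subr_ge0.
have -> : `|a| ^+ 2 + `|b| ^+ 2 - `|a| * `|b| * 2 = (`|a| - `|b|) ^+ 2 by ring.
by rewrite real_exprn_even_ge0 // realB.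
Qed.

Lemma mul_adjmx_diag_norm_le1 m (X Y : 'M[C]_(N, m)) k :
  (X *m adjmx X) k k <= 1 -> (Y *m adjmx Y) k k <= 1 -> `|(X *m adjmx Y) k k| <= 1.
Proof.
move=> XX YY; rewrite -(ler_pM2r (ltr0Sn C 1)) mul1r.
apply: le_trans (lerD XX YY); rewrite !mul_adjmx_diag mxE -big_split /=.
apply: le_trans (ler_wpM2r (ler0n _ 2) (ler_norm_sum _ _ _)) _.
by rewrite mulr_suml; apply: ler_sum => j _; rewrite adjmxE normr_mul_conj_le.
Qed.

Lemma mxtrace_diag_mul (t : 'rV[C]_N) (M : 'M[C]_N) :
  \tr (diag_mx t *m M) = \sum_k t 0 k * M k k.
Proof. by apply: eq_bigr => k _; rewrite mul_diag_mx mxE. Qed.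

Lemma tr_psd_mul_contraction (T : 'M[C]_N) m (V W : 'M[C]_(N, m)) :
  psd T -> orthoproj (V *m adjmx V) -> orthoproj (W *m adjmx W) ->
  `|\tr (T *m (V *m adjmx W))| <= \tr T.
Proof.
move=> /psd_spectral_decomp[U [t decT]] PV PW.
rewrite (spectral_decomp_tr decT); case: decT => UU t_ge0 ->.
rewrite -!mulmxA mxtrace_mulC -mulmxA mxtrace_diag_mul.
apply: le_trans (ler_norm_sum _ _ _) (ler_sum _ _) => k _.
rewrite normrM (ger0_norm (t_ge0 k)) ler_piMr //.
have -> : U *m (V *m adjmx W) *m adjmx U = (U *m V) *m adjmx (U *m W).
  by rewrite adjmx_mul !mulmxA.
apply: mul_adjmx_diag_norm_le1; rewrite adjmx_mul mulmxA -(mulmxA U);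
  exact: orthoproj_conj_diag_le1.
Qed.

Lemma psd_sqrtm_sandwich (rho : 'M[C]_N) m (B : 'M[C]_(N, m)) : psd rho ->
  psd (sqrtm rho *m (B *m adjmx B) *m sqrtm rho).
Proof.
move=> /sqrtmP[/psd_adjmx Sh _].
by rewrite -{1}Sh; apply/psd_adjmx_mul/psd_mul_adjmx.
Qed.

Lemma uhlmann_bound (rho : 'M[C]_N) m (A B : 'M[C]_(N, m)) :
  psd rho -> A *m adjmx A = rho ->
  `|\tr (adjmx A *m B)| <= \tr (sqrtm (sqrtm rho *m (B *m adjmx B) *m sqrtm rho)).
Proof.
move=> psd_rho AA; have [psdS SS] := sqrtmP psd_rho.
have [psdT TT] := sqrtmP (psd_sqrtm_sandwich B psd_rho).
move: psdS SS psdT TT; set S := sqrtm rho; set T := sqrtm _ => psdS SS psdT TT.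
have Sh := psd_adjmx psdS.
have [PA [GA [PAproj _ AE AA']]] := polar_factor psdS (etrans AA (esym SS)).
have SBSB : (S *m B) *m adjmx (S *m B) = T *m T by rewrite TT adjmx_mul Sh !mulmxA.
have [PB [GB [PBproj _ SBE SBB]]] := polar_factor psdT SBSB.
rewrite AE adjmx_mul Sh -mulmxA SBE mxtrace_mulC -mulmxA.
by apply: tr_psd_mul_contraction; rewrite ?AA' ?SBB.
Qed.

Lemma orthoproj_unitary_completion (P : 'M[C]_N) m (V E : 'M[C]_(N, m)) :
  orthoproj P -> V *m adjmx V = P -> E *m adjmx E = 1%:M -> V *m adjmx E = 0 ->
  exists W, W *m adjmx W = 1%:M /\ V *m adjmx W = P.
Proof.
move=> /orthoproj_compl[Ih Ii] VV EE VE.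
set Z := (1%:M - P) *m E; exists (V + Z).
have VZ : V *m adjmx Z = 0 by rewrite adjmx_mul mulmxA VE mul0mx.
have ZV : Z *m adjmx V = 0 by rewrite -[LHS]adjmxK adjmx_mul adjmxK VZ adjmx0.
have ZZ : Z *m adjmx Z = 1%:M - P.
  by rewrite adjmx_mul Ih mulmxA -(mulmxA _ E) EE mulmx1 Ii.
split; last by rewrite adjmxD mulmxDr VV VZ addr0.
by rewrite adjmxD mulmxDl !mulmxDr VV VZ ZV ZZ addr0 add0r addrC subrK.
Qed.

Lemma zero_cols_coisometry m (B : 'M[C]_(N, m)) (e : 'I_N -> 'I_m) :
  injective e -> (forall a k, B a (e k) = 0) ->
  exists E : 'M[C]_(N, m), E *m adjmx E = 1%:M /\ B *m adjmx E = 0.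
Proof.
move=> e_inj Be; exists (\matrix_(k, j) (e k == j)%:R); split.
  apply/matrixP=> k l; rewrite !mxE (bigD1 (e k)) //= big1 => [|j /negbTE ej].
    by rewrite !mxE eqxx rmorph_nat (inj_eq e_inj) eq_sym mul1r addr0.
  by rewrite !mxE eq_sym ej mul0r.
apply/matrixP=> a k; rewrite !mxE (bigD1 (e k)) //= big1 => [|j /negbTE ej].
  by rewrite Be mul0r addr0.
by rewrite !mxE eq_sym ej rmorph0 mulr0.
Qed.

Lemma uhlmann_attained (rho : 'M[C]_N) m (B : 'M[C]_(N, m)) (e : 'I_N -> 'I_m) :
  psd rho -> injective e -> (forall a k, B a (e k) = 0) ->
  exists A : 'M[C]_(N, m), A *m adjmx A = rho /\
    \tr (adjmx A *m B) = \tr (sqrtm (sqrtm rho *m (B *m adjmx B) *m sqrtm rho)).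
Proof.
move=> psd_rho e_inj Be; have [psdS SS] := sqrtmP psd_rho.
have [psdT TT] := sqrtmP (psd_sqrtm_sandwich B psd_rho).
move: psdS SS psdT TT; set S := sqrtm rho; set T := sqrtm _ => psdS SS psdT TT.
have Sh := psd_adjmx psdS.
have SBSB : (S *m B) *m adjmx (S *m B) = T *m T by rewrite TT adjmx_mul Sh !mulmxA.
have [P [G [Pproj PT SBE VV]]] := polar_factor psdT SBSB.
(* the zero columns of [B] leave room to complete [G *m (S *m B)] to a coisometry *)
have [E [EE BE]] := zero_cols_coisometry e_inj Be.
have VE : G *m (S *m B) *m adjmx E = 0 by rewrite -!mulmxA BE !mulmx0.
have [W [WW VW]] := orthoproj_unitary_completion Pproj VV EE VE.
exists (S *m W); split.
  by rewrite adjmx_mul mulmxA -(mulmxA S) WW mulmx1 Sh SS.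
by rewrite adjmx_mul Sh -mulmxA SBE mxtrace_mulC -mulmxA VW mxtrace_mulC PT.
Qed.

End Uhlmann.

Section Infimum.
Variable C : numClosedFieldType.
Hypothesis C_complete : real_complete C.

Lemma infC_glb (A : C -> Prop) : (exists x, A x) -> (forall x, A x -> x \is Num.real) ->
  (exists l, forall x, A x -> l <= x) -> is_glb A (infC A).
Proof.
move=> A0 Areal Abounded; rewrite /infC; case: excluded_middle_informative => [H|[]].
  by case: constructive_indefinite_description.
exact: C_complete.
Qed.

Lemma infC_empty (A : C -> Prop) : (forall x, ~ A x) -> infC A = 0.
Proof.
move=> A_empty; rewrite /infC; case: excluded_middle_informative => [H|//].
exfalso; case: H => g [_ g_max].
by have := g_max (g + 1) (fun x Ax => False_ind _ (A_empty x Ax)); rewrite gerDl ler10.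
Qed.

Lemma is_glb_unique (A : C -> Prop) g1 g2 : is_glb A g1 -> is_glb A g2 -> g1 = g2.
Proof. by move=> [lb1 max1] [lb2 max2]; apply/le_anti; rewrite max2 ?max1. Qed.

Lemma infC_sub0 (A : C -> Prop) : (forall x, A x -> x = 0) -> infC A = 0.
Proof.
move=> A0; have [[x Ax]|A_empty] := classic (exists x, A x); last first.
  by apply: infC_empty => x Ax; apply: A_empty; exists x.
apply: (@is_glb_unique A).
  by apply: infC_glb; [exists x | move=> _ /A0 ->; exact: real0 | exists 0 => _ /A0 ->].
by split=> [_ /A0 -> // | l /(_ x Ax)]; rewrite (A0 x Ax).
Qed.

Lemma is_glb_approx (A : C -> Prop) g e : is_glb A g -> (forall x, A x -> x \is Num.real) ->
  g \is Num.real -> 0 < e -> exists2 x, A x & x <= g + e.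
Proof.
move=> [_ g_max] Areal g_real e_gt0; apply: NNPP => no_x.
suff : g + e <= g by rewrite gerDl => /(lt_le_trans e_gt0); rewrite ltxx.
apply: g_max => x Ax; apply: ltW.
rewrite real_ltNge ?realD ?(gtr0_real e_gt0) ?(Areal x Ax) //.
by apply/negP => x_le; apply: no_x; exists x.
Qed.

Lemma infC_eq_approx (R G : C -> Prop) :
  (exists x, R x) -> (forall x, R x -> 0 <= x) -> (exists y, G y) ->
  (forall y, G y -> y \is Num.real) ->
  (forall y, G y -> exists2 x, R x & x <= y) ->
  (forall x e, R x -> 0 < e -> exists2 y, G y & y <= x + e) ->
  infC R = infC G.
Proof.
move=> R0 R_ge0 G0 Greal GR RG.
have G_ge0 y : G y -> 0 <= y by move=> /GR[x /R_ge0]; apply: le_trans.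
have [lbR maxR] := infC_glb R0 (fun x Rx => ger0_real (R_ge0 x Rx)) (ex_intro _ 0 R_ge0).
have [lbG maxG] := infC_glb G0 Greal (ex_intro _ 0 G_ge0).
apply/le_anti/andP; split.
  by apply: maxG => y /GR[x Rx]; apply: le_trans (lbR x Rx).
apply: maxR => x Rx; apply/ler_addgt0Pr => e /(RG x e Rx)[y Gy].
exact: le_trans (lbG y Gy).
Qed.

End Infimum.

Section Vectors.
Variables (C : numClosedFieldType) (N : nat).

Lemma inner_conj (phi psi : 'cV[C]_N) : inner psi phi = (inner phi psi)^*.
Proof. by rewrite /inner -adjmxE adjmx_mul adjmxK. Qed.

Lemma norm_inner_le1 (phi psi : 'cV[C]_N) : normalized phi -> normalized psi ->
  `|inner phi psi| <= 1.
Proof.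
move=> nphi npsi; have := @mul_adjmx_diag_norm_le1 C 1 N (adjmx phi) (adjmx psi) 0.
by rewrite !adjmxK; apply; rewrite -/(inner _ _) ?nphi ?npsi.
Qed.

Lemma tr_proj (v : 'cV[C]_N) : \tr (proj v) = inner v v.
Proof. by rewrite /proj mxtrace_mulC /inner /mxtrace big_ord1. Qed.

Lemma tr_sum_proj m (p : 'I_m -> C) (psi : 'I_m -> 'cV[C]_N) :
  (forall j, normalized (psi j)) -> \tr (\sum_j p j *: proj (psi j)) = \sum_j p j.
Proof.
move=> npsi; rewrite raddf_sum /=; apply: eq_bigr => j _.
by rewrite mxtraceZ tr_proj npsi mulr1.
Qed.

Lemma innerZ a (v : 'cV[C]_N) : inner (a *: v) (a *: v) = a^* * a * inner v v.
Proof. by rewrite /inner adjmxZ -scalemxAl -scalemxAr !mxE mulrA. Qed.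

Definition colmx m (a : 'I_m -> C) (v : 'I_m -> 'cV[C]_N) : 'M[C]_(N, m) :=
  \matrix_(i, j) (a j * v j i 0).

Lemma colmx_mul_adj m a b (v w : 'I_m -> 'cV[C]_N) :
  colmx a v *m adjmx (colmx b w) = \sum_j (a j * (b j)^*) *: (v j *m adjmx (w j)).
Proof.
apply/matrixP=> i k; rewrite summxE !mxE; apply: eq_bigr => j _.
by rewrite !mxE big_ord1 /adjmx !mxE rmorphM; ring.
Qed.

Lemma tr_adj_colmx m a b (v w : 'I_m -> 'cV[C]_N) :
  \tr (adjmx (colmx a v) *m colmx b w) = \sum_j (a j)^* * b j * inner (v j) (w j).
Proof.
apply: eq_bigr => j _; rewrite /inner !mxE mulr_sumr; apply: eq_bigr => i _.
by rewrite /adjmx !mxE rmorphM; ring.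
Qed.

Lemma sqrtC_mul_adj_colmx m (p : 'I_m -> C) (v : 'I_m -> 'cV[C]_N) :
  (forall j, 0 <= p j) ->
  colmx (fun j => sqrtC (p j)) v *m adjmx (colmx (fun j => sqrtC (p j)) v) =
  \sum_j p j *: proj (v j).
Proof.
move=> p_ge0; rewrite colmx_mul_adj; apply: eq_bigr => j _.
by rewrite geC0_conj ?sqrtC_ge0 // -expr2 sqrtCK.
Qed.

(* a zero column is given the direction [u] *)
Lemma colmx_normalize m (A : 'M[C]_(N, m)) (u : 'cV[C]_N) : normalized u ->
  exists p psi, (forall j, 0 <= p j /\ normalized (psi j)) /\
                A = colmx (fun j => sqrtC (p j)) psi.
Proof.
move=> nu; pose p j := \sum_a `|A a j| ^+ 2.
have p_ge0 j : 0 <= p j by apply: sumr_ge0 => a _; exact: exprn_ge0.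
have col_inner j : inner (col j A) (col j A) = p j.
  by rewrite /inner mxE; apply: eq_bigr => a _; rewrite !mxE normCK mulrC.
exists p, (fun j => if p j == 0 then u else (sqrtC (p j))^-1 *: col j A).
split=> [j|]; first (split=> //; case: eqP => // /eqP pj0).
  rewrite /normalized innerZ col_inner fmorphV /= geC0_conj ?sqrtC_ge0 //.
  by rewrite -invfM -expr2 sqrtCK mulVf.
apply/matrixP => a j; rewrite !mxE; case: eqP => [pj0|/eqP pj0]; last first.
  by rewrite !mxE mulrA mulfV ?mul1r // sqrtC_eq0.
have /eqP := pj0; rewrite psumr_eq0 => [/allP/(_ a (mem_index_enum _))|b _].
  by rewrite expf_eq0 /= normr_eq0 pj0 sqrtC0 mul0r => /eqP.
exact: exprn_ge0.
Qed.

End Vectors.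

Section Scalars.
Variable C : numClosedFieldType.

Definition phase (z : C) := if z == 0 then 1 else z / `|z|.

Lemma phase_mul_conj z : phase z * (phase z)^* = 1.
Proof.
rewrite /phase; case: eqP => [_|/eqP z0]; first by rewrite rmorph1 mulr1.
rewrite rmorphM fmorphV /= (geC0_conj (normr_ge0 z)) mulrACA -normCK -invfM.
by rewrite -expr2 divff // expf_neq0 // normr_eq0.
Qed.

Lemma phase_mul_conjC z : phase z * z^* = `|z|.
Proof.
rewrite /phase; case: eqP => [->|/eqP z0]; first by rewrite rmorph0 mulr0 normr0.
by rewrite mulrAC -normCK expr2 mulfK // normr_eq0.
Qed.

Lemma sum_mul_sqr_le m (b a : 'I_m -> C) : (forall j, 0 <= b j) -> (forall j, 0 <= a j) ->
  \sum_j b j ^+ 2 = 1 -> (\sum_j b j * a j) ^+ 2 <= \sum_j a j ^+ 2.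
Proof.
move=> b_ge0 a_ge0 b_unit; set Y := \sum_j b j * a j.
have Y_ge0 : 0 <= Y by apply: sumr_ge0 => j _; rewrite mulr_ge0.
have : Y * Y * 2 <= Y ^+ 2 * (\sum_j b j ^+ 2) + \sum_j a j ^+ 2.
  rewrite {1}/Y !mulr_suml mulr_sumr -big_split /=; apply: ler_sum => j _.
  rewrite -subr_ge0 (_ : _ - _ = (Y * b j - a j) ^+ 2); last by ring.
  by rewrite real_exprn_even_ge0 // realB // ger0_real // mulr_ge0.
by rewrite b_unit mulr1 -expr2 -[2]/(1 + 1) mulrDr mulr1 lerD2l.
Qed.

Lemma sqr_norm_sum_sqrtC_le m (p q : 'I_m -> C) (z : 'I_m -> C) :
  (forall j, 0 <= p j) -> (forall j, 0 <= q j) -> \sum_j q j = 1 ->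
  `|\sum_j sqrtC (p j) * sqrtC (q j) * z j| ^+ 2 <= \sum_j p j * `|z j| ^+ 2.
Proof.
move=> p_ge0 q_ge0 q1.
have sp_ge0 j : 0 <= sqrtC (p j) by rewrite sqrtC_ge0.
have sq_ge0 j : 0 <= sqrtC (q j) by rewrite sqrtC_ge0.
have norm_le : `|\sum_j sqrtC (p j) * sqrtC (q j) * z j| <=
               \sum_j sqrtC (q j) * (sqrtC (p j) * `|z j|).
  apply: le_trans (ler_norm_sum _ _ _) (ler_sum _ _) => j _.
  by rewrite !normrM (ger0_norm (sp_ge0 j)) (ger0_norm (sq_ge0 j)) mulrCA mulrA.
apply: le_trans (lerXn2r 2 (normr_ge0 _) _ norm_le) _.
  by rewrite nnegrE sumr_ge0 // => j _; rewrite !mulr_ge0.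
rewrite [leRHS](eq_bigr (fun j => (sqrtC (p j) * `|z j|) ^+ 2)) => [|j _].
  apply: sum_mul_sqr_le => // [j|]; first by rewrite mulr_ge0.
  by rewrite -q1; apply: eq_bigr => j _; rewrite sqrtCK.
by rewrite exprMn sqrtCK.
Qed.

End Scalars.

Section Decompositions.
Variables (C : numClosedFieldType) (N : nat).

Lemma mixed_hull_proj (S : 'cV[C]_N -> Prop) phi :
  S phi -> normalized phi -> mixed_hull S (proj phi).
Proof.
move=> Sphi nphi; exists [:: (1, phi)]; rewrite !big_seq1 scale1r; split => //.
by move=> pv; rewrite inE => /eqP ->.
Qed.

Lemma mixed_hull_family (S : 'cV[C]_N -> Prop) m (q : 'I_m -> C) phi :
  (forall j, [/\ 0 <= q j, normalized (phi j) & S (phi j)]) -> \sum_j q j = 1 ->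
  mixed_hull S (\sum_j q j *: proj (phi j)).
Proof.
move=> qphi q1; exists [seq (q j, phi j) | j <- enum 'I_m]; split; last split.
- by move=> _ /mapP[j _ ->]; case: (qphi j).
- by rewrite big_map big_enum.
- by rewrite big_map big_enum.
Qed.

Lemma pure_decomp_family (rho : 'M[C]_N) m (p : 'I_m -> C) psi :
  (forall j, 0 <= p j /\ normalized (psi j)) -> rho = \sum_j p j *: proj (psi j) ->
  pure_decomp rho [seq (p j, psi j) | j <- enum 'I_m].
Proof.
move=> ppsi rhoE; split=> [_ /mapP[j _ ->]|]; first exact: ppsi.
by rewrite big_map big_enum.
Qed.

Lemma big_seq_ord (V : zmodType) T (s : seq T) x0 m (F : T -> V) :
  (size s <= m)%N -> F x0 = 0 -> \sum_(x <- s) F x = \sum_(j < m) F (nth x0 s j).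
Proof.
move=> sm F0; rewrite (big_nth x0) -(big_mkord xpredT (fun j => F (nth x0 s j))).
rewrite (big_cat_nat (leq0n (size s)) sm) /= [X in _ + X]big1_seq ?addr0 //.
by move=> j /andP[_]; rewrite mem_index_iota => /andP[sj _]; rewrite nth_default.
Qed.

End Decompositions.

Definition roof_values (C : numClosedFieldType) N (S : 'cV[C]_N -> Prop) rho x :=
  exists s, pure_decomp rho s /\ x = \sum_(pv <- s) pv.1 * geo_pure S pv.2.

Definition fid_values (C : numClosedFieldType) N (S : 'cV[C]_N -> Prop) rho x :=
  exists sigma, mixed_hull S sigma /\ x = 1 - fidelity rho sigma.

Section GeometricMeasure.
Variables (C : numClosedFieldType) (N : nat) (S : 'cV[C]_N -> Prop) (rho : 'M[C]_N).
Hypothesis C_complete : real_complete C.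
Hypothesis density_rho : density rho.
Variable phi0 : 'cV[C]_N.
Hypotheses (S_phi0 : S phi0) (phi0_normalized : normalized phi0).

Let psd_rho : psd rho. Proof. by case: density_rho. Qed.

Lemma fidelity_ge0 sigma : 0 <= fidelity rho sigma.
Proof. by rewrite exprn_ge0 // tr_sqrtm_ge0. Qed.

Lemma decomp_weights_sum m (p : 'I_m -> C) psi :
  (forall j, normalized (psi j)) -> rho = \sum_j p j *: proj (psi j) -> \sum_j p j = 1.
Proof. by move=> npsi rhoE; case: density_rho => _ <-; rewrite rhoE tr_sum_proj. Qed.

Lemma one_sub_sqr_inner_ge0 (phi psi : 'cV[C]_N) : normalized phi -> normalized psi ->
  0 <= 1 - `|inner phi psi| ^+ 2.
Proof. by move=> nphi npsi; rewrite subr_ge0 exprn_ile1 ?norm_inner_le1. Qed.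

Lemma geo_pure_glb psi : normalized psi -> is_glb (fun x => exists phi,
  S phi /\ normalized phi /\ x = 1 - `|inner phi psi| ^+ 2) (geo_pure S psi).
Proof.
move=> npsi; have ge0 phi : normalized phi -> 0 <= 1 - `|inner phi psi| ^+ 2.
  by move=> nphi; apply: one_sub_sqr_inner_ge0.
apply: infC_glb => //.
- by exists (1 - `|inner phi0 psi| ^+ 2); exists phi0.
- by move=> _ [phi [_ [nphi ->]]]; rewrite ger0_real ?ge0.
- by exists 0 => _ [phi [_ [nphi ->]]]; rewrite ge0.
Qed.

Lemma geo_pure_le psi phi : normalized psi -> S phi -> normalized phi ->
  geo_pure S psi <= 1 - `|inner phi psi| ^+ 2.
Proof. by move=> /geo_pure_glb[lb _] Sphi nphi; apply: lb; exists phi. Qed.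

Lemma geo_pure_ge0 psi : normalized psi -> 0 <= geo_pure S psi.
Proof.
move=> npsi; have [_ max] := geo_pure_glb npsi.
by apply: max => _ [phi [_ [nphi ->]]]; apply: one_sub_sqr_inner_ge0.
Qed.

Lemma geo_pure_approx psi e : normalized psi -> 0 < e ->
  exists phi, [/\ S phi, normalized phi &
    1 - `|inner phi psi| ^+ 2 <= geo_pure S psi + e].
Proof.
move=> npsi e_gt0; have gp_ge0 := geo_pure_ge0 npsi.
have real_set x : (exists phi, S phi /\ normalized phi /\ x = 1 - `|inner phi psi| ^+ 2) ->
    x \is Num.real.
  by move=> [phi [_ [nphi ->]]]; rewrite ger0_real ?one_sub_sqr_inner_ge0.
have [_ [phi [Sphi [nphi ->]]] le_e] :=
  is_glb_approx (geo_pure_glb npsi) real_set (ger0_real gp_ge0) e_gt0.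
by exists phi.
Qed.

Lemma hull_fidelity_le_overlap sigma : mixed_hull S sigma ->
  exists m (p : 'I_m -> C) psi phi,
    [/\ forall j, 0 <= p j /\ normalized (psi j), rho = \sum_j p j *: proj (psi j),
        forall j, S (phi j) /\ normalized (phi j)
      & fidelity rho sigma <= \sum_j p j * `|inner (phi j) (psi j)| ^+ 2].
Proof.
case=> s [s_in [q1 sigmaE]]; pose x0 := ((0 : C), phi0).
(* [N] zero columns leave room for the optimal purification *)
pose q (j : 'I_(size s + N)) := (nth x0 s j).1.
pose phi (j : 'I_(size s + N)) := (nth x0 s j).2.
have qphi j : 0 <= q j /\ normalized (phi j) /\ S (phi j).
  rewrite /q /phi; case: (ltnP j (size s)) => [/(mem_nth x0)/s_in //|js].
  by rewrite nth_default.
have q_ge0 j : 0 <= q j by case: (qphi j).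
pose B := colmx (fun j => sqrtC (q j)) phi.
have BB : B *m adjmx B = sigma.
  rewrite sqrtC_mul_adj_colmx // sigmaE.
  by rewrite (big_seq_ord (x0 := x0) (m := size s + N)) ?leq_addr ?scale0r.
have B_pad a k : B a (rshift (size s) k) = 0.
  by rewrite mxE /q nth_default ?leq_addr ?sqrtC0 ?mul0r.
have [A [AA trAB]] := uhlmann_attained psd_rho (@rshift_inj _ _) B_pad.
have [p [psi [ppsi AE]]] := colmx_normalize A phi0_normalized.
have p_ge0 j : 0 <= p j by case: (ppsi j).
exists _, p, psi, phi; split => //.
- by rewrite -AA AE sqrtC_mul_adj_colmx.
- by move=> j; case: (qphi j) => _ [].
rewrite /fidelity -BB -trAB -[X in X ^+ 2]ger0_norm; last by rewrite trAB tr_sqrtm_ge0.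
rewrite AE tr_adj_colmx.
rewrite (eq_bigr (fun j => sqrtC (p j) * sqrtC (q j) * inner (psi j) (phi j))).
  under [leRHS]eq_bigr do rewrite -norm_conjC -inner_conj.
  apply: sqr_norm_sum_sqrtC_le => //.
  by rewrite -q1 (big_seq_ord (x0 := x0) (m := size s + N)) ?leq_addr.
by move=> j _; rewrite geC0_conj ?sqrtC_ge0.
Qed.

Lemma overlap_le_hull_fidelity m (p : 'I_m -> C) psi phi :
  (forall j, 0 <= p j /\ normalized (psi j)) -> rho = \sum_j p j *: proj (psi j) ->
  (forall j, S (phi j) /\ normalized (phi j)) ->
  exists2 sigma, mixed_hull S sigma &
    \sum_j p j * `|inner (phi j) (psi j)| ^+ 2 <= fidelity rho sigma.
Proof.
move=> ppsi rhoE Sphi; have p_ge0 j : 0 <= p j by case: (ppsi j).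
set T := \sum_j _.
have T_ge0 : 0 <= T by apply: sumr_ge0 => j _; rewrite mulr_ge0 ?exprn_ge0.
have [T0|T_neq0] := eqVneq T 0.
  by exists (proj phi0); [apply: mixed_hull_proj | rewrite T0 fidelity_ge0].
pose r := sqrtC T; have r_gt0 : 0 < r by rewrite sqrtC_gt0 lt_def T_neq0.
pose z j := inner (phi j) (psi j).
(* the phase of [beta j] makes every term of [tr (A^* B)] nonnegative *)
pose beta j := sqrtC (p j) * `|z j| / r * phase (z j).
pose A := colmx (fun j => sqrtC (p j)) psi; pose B := colmx beta phi.
have AA : A *m adjmx A = rho by rewrite sqrtC_mul_adj_colmx.
have beta_sqr j : beta j * (beta j)^* = p j * `|z j| ^+ 2 / T.
  rewrite rmorphM /= geC0_conj ?divr_ge0 ?mulr_ge0 ?sqrtC_ge0 ?(ltW r_gt0) //.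
  by rewrite mulrACA phase_mul_conj mulr1 -expr2 expr_div_n exprMn !sqrtCK.
exists (B *m adjmx B).
  rewrite colmx_mul_adj; apply: mixed_hull_family => [j|].
    by rewrite -normCK exprn_ge0 //; case: (Sphi j).
  by under eq_bigr do rewrite beta_sqr; rewrite -mulr_suml divff.
have trAB : \tr (adjmx A *m B) = r.
  rewrite tr_adj_colmx (eq_bigr (fun j => p j * `|z j| ^+ 2 / r)) => [|j _].
    by rewrite -mulr_suml -/T -[T]sqrtCK -/r expr2 mulfK // gt_eqF.
  rewrite geC0_conj ?sqrtC_ge0 // inner_conj /beta -!mulrA phase_mul_conjC -/(z j).
  by rewrite !mulrA -expr2 sqrtCK mulrAC.
have := uhlmann_bound B psd_rho AA; rewrite trAB (gtr0_norm r_gt0) => r_le.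
by rewrite /fidelity -(sqrtCK T) lerXn2r ?nnegrE ?tr_sqrtm_ge0 ?(ltW r_gt0).
Qed.

Lemma roof_value_le_fid sigma : mixed_hull S sigma ->
  exists2 x, roof_values S rho x & x <= 1 - fidelity rho sigma.
Proof.
move=> /hull_fidelity_le_overlap[m [p [psi [phi [ppsi rhoE Sphi F_le]]]]].
have p_ge0 j : 0 <= p j by case: (ppsi j).
have npsi j : normalized (psi j) by case: (ppsi j).
exists (\sum_j p j * geo_pure S (psi j)).
  exists [seq (p j, psi j) | j <- enum 'I_m].
  by rewrite big_map big_enum; split=> //; apply: pure_decomp_family.
apply: le_trans (lerB (lexx 1) F_le).
rewrite -(decomp_weights_sum npsi rhoE) -sumrB; apply: ler_sum => j _.
rewrite -{2}[p j]mulr1 -mulrBr ler_wpM2l //.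
by case: (Sphi j) => Sphij nphij; apply: geo_pure_le.
Qed.

Lemma fid_value_le_roof x e : roof_values S rho x -> 0 < e ->
  exists2 y, fid_values S rho y & y <= x + e.
Proof.
move=> [s [[s_in rhoE] ->]] e_gt0; pose x0 := ((0 : C), phi0).
pose p (j : 'I_(size s)) := (nth x0 s j).1; pose psi (j : 'I_(size s)) := (nth x0 s j).2.
have ppsi j : 0 <= p j /\ normalized (psi j) by apply/s_in/mem_nth.
have p_ge0 j : 0 <= p j by case: (ppsi j).
have npsi j : normalized (psi j) by case: (ppsi j).
have {}rhoE : rho = \sum_j p j *: proj (psi j).
  by rewrite rhoE (big_seq_ord (x0 := x0) (m := size s)) ?scale0r.
have [phi phi_approx] := fin_all_exists (fun j => geo_pure_approx (npsi j) e_gt0).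
have Sphi j : S (phi j) /\ normalized (phi j) by case: (phi_approx j).
have [sigma hull_sigma ov_le] := overlap_le_hull_fidelity ppsi rhoE Sphi.
exists (1 - fidelity rho sigma); first by exists sigma.
apply: le_trans (lerB (lexx 1) ov_le) _.
rewrite (big_seq_ord (x0 := x0) (m := size s)) ?mul0r // -/p -/psi.
have sum_p := decomp_weights_sum npsi rhoE.
have -> : \sum_j p j * geo_pure S (psi j) + e = \sum_j p j * (geo_pure S (psi j) + e).
  by rewrite (eq_bigr _ (fun j _ => mulrDr _ _ _)) big_split /= -mulr_suml sum_p mul1r.
rewrite -{1}sum_p -sumrB; apply: ler_sum => j _.
by rewrite -{1}[p j]mulr1 -mulrBr ler_wpM2l //; case: (phi_approx j).
Qed.

Lemma geo_roof_eq_geo_fid_witness : geo_roof S rho = geo_fid S rho.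
Proof.
have hull0 := mixed_hull_proj S_phi0 phi0_normalized.
apply: infC_eq_approx => //.
- by have [x Rx _] := roof_value_le_fid hull0; exists x.
- move=> _ [s [[s_in _] ->]]; rewrite big_seq sumr_ge0 // => pv /s_in[p_ge0 npv].
  by rewrite mulr_ge0 // geo_pure_ge0.
- by exists (1 - fidelity rho (proj phi0)), (proj phi0).
- by move=> _ [sigma [_ ->]]; rewrite realB ?real1 ?ger0_real ?fidelity_ge0.
- by move=> _ [sigma [hull_sigma ->]]; apply: roof_value_le_fid.
- exact: fid_value_le_roof.
Qed.

End GeometricMeasure.

Lemma geo_roof_eq_geo_fid (C : numClosedFieldType) N (S : 'cV[C]_N -> Prop) rho :
  real_complete C -> density rho -> geo_roof S rho = geo_fid S rho.
Proof.
move=> C_complete density_rho.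
have [[phi0 [S_phi0 nphi0]]|no_state] := classic (exists phi, S phi /\ normalized phi).
  exact (geo_roof_eq_geo_fid_witness C_complete density_rho S_phi0 nphi0).
(* with no admissible pure state both infima are taken over sets inside {0} *)
have geo_pure0 psi : geo_pure S psi = 0.
  by apply: infC_empty => _ [phi [Sphi [nphi _]]]; apply: no_state; exists phi.
rewrite /geo_roof /geo_fid (@infC_sub0 _ C_complete) => [|_ [s [_ ->]]]; last first.
  by rewrite big1 // => pv _; rewrite geo_pure0 mulr0.
rewrite infC_empty // => _ [_ [[[|pv s] [s_in [s1 _]]] _]].
  by move: s1; rewrite big_nil => /eqP; rewrite eq_sym oner_eq0.
by have [_ [npv Spv]] := s_in pv (mem_head _ _); apply: no_state; exists pv.2.
Qed.

Unset Implicit Arguments.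

Theorem proposition2 (C : numClosedFieldType) (HC : real_complete C) :
  (forall (n : nat) (d : 'I_n -> nat) (k : nat) (rho : 'M[C]_#|prodT d|),
     (2 <= k)%N -> density rho ->
     E_G d k rho = geo_fid (k_producible_pure d k.-1) rho) /\
  (forall (D k : nat) (rho : 'M[C]_D),
     (2 <= k)%N -> density rho ->
     C_G k rho = geo_fid (fun psi : 'cV[C]_D => (coh_rank psi <= k.-1)%N) rho).
Proof.
by split=> [n d | D] k rho _ density_rho; apply: geo_roof_eq_geo_fid.
Qed.
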